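(* Let $a,b,c \geq 0$ be integers and $k = a + 2b + 3c$ (so $E_2^aE_4^bE_6^c$ has weight $2k$). Define $s_{a,b,c}(n)$ by $\sum_{n\geq 0} s_{a,b,c}(n) q^n = E_2^a E_4^b E_6^c$. Then for all integers $n \geq 1$, $$|s_{a,b,c}(n)| \leq 109 \cdot 2^{2k-1} n^{2k-1} (1+\log(n))^k.$$
   Context: $E_2 = 1 - 24\sum_{n\geq1}\sigma_1(n)q^n$, $E_4 = 1 + 240\sum_{n \geq 1}\sigma_3(n)q^n$, $E_6 = 1 - 504\sum_{n\geq1}\sigma_5(n)q^n$, where $\sigma_\ell(n) = \sum_{d \mid n} d^\ell$, regarded as formal power series in $q$. *)

From mathcomp Require Import all_boot all_order all_algebra.
From mathcomp Require Import all_classical all_reals all_analysis.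
Set Implicit Arguments. Unset Strict Implicit. Unset Printing Implicit Defensive.
Import Order.TTheory GRing.Theory Num.Theory.
Local Open Scope ring_scope.

(* Formal power series in q with integer coefficients: n |-> coefficient of q^n. *)
Definition fps := nat -> int.

Definition sigma (l n : nat) : nat := (\sum_(1 <= d < n.+1 | d %| n) d ^ l)%N.

Definition E2 : fps := fun n => if n == 0%N then 1 else - 24 * (sigma 1 n)%:Z.
Definition E4 : fps := fun n => if n == 0%N then 1 else 240 * (sigma 3 n)%:Z.
Definition E6 : fps := fun n => if n == 0%N then 1 else - 504 * (sigma 5 n)%:Z.

Definition fps_mul (f g : fps) : fps := fun n => \sum_(i < n.+1) f i * g (n - i)%N.
Definition fps_one : fps := fun n => (n == 0%N)%:Z.
Definition fps_pow (f : fps) (k : nat) : fps := iter k (fps_mul f) fps_one.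

Definition s_abc (a b c : nat) : fps :=
  fps_mul (fps_pow E2 a) (fps_mul (fps_pow E4 b) (fps_pow E6 c)).

From mathcomp Require Import all_boot all_order all_algebra.
From mathcomp Require Import all_classical all_reals all_analysis.
From mathcomp Require Import ring lra zify.
Import Order.TTheory GRing.Theory Num.Theory.
Set Implicit Arguments.
Unset Strict Implicit.
Unset Printing Implicit Defensive.

(* Since sigma_l(m) = sum_(d | m) (m/d)^l <= m^l H_m <= m^l (1 + ln m), the coefficients
   of E_2, E_4, E_6 are at most 24 m (1 + ln m), 240 m^3 (1 + ln m)^2 and
   504 m^5 (1 + ln m)^3.  Call a series with constant term 1 and
   |f_m| <= h m^(2k-1) (1 + ln m)^k (k, h)-bounded.  Bounding the interior terms of a
   Cauchy product by n^(2a) sum_i i (n - i)^(2b+1), which the midpoint rule compares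
   with an integral, the product of an (a+1, h1)- and a (b+1, h2)-bounded series is
   (a+b+2, h1 + h2 + h1 h2 / ((2b+2)(2b+3)))-bounded.  For the three Eisenstein
   series this keeps the constant quartic: E_(2w) times a (K, 24 K^4)-bounded series
   is (K+w, 24 (K+w)^4)-bounded.  By associativity E_2^a E_4^b E_6^c is therefore
   (k, 24 k^4)-bounded, and 24 k^4 <= 109 * 2^(2k-1). *)

Lemma big_divisors_div (T : Type) (idx : T) (op : Monoid.com_law idx)
    (F : nat -> T) m : 0 < m ->
  \big[op/idx]_(1 <= d < m.+1 | d %| m) F d =
    \big[op/idx]_(1 <= d < m.+1 | d %| m) F (m %/ d).
Proof.
move=> m_gt0; rewrite -[LHS]big_filter -[RHS]big_filter.
set D := [seq d <- index_iota 1 m.+1 | d %| m].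
have D_uniq : uniq D by rewrite filter_uniq ?iota_uniq.
have D_div d : d \in D -> m %/ d \in D /\ m %/ (m %/ d) = d.
  rewrite !mem_filter !mem_index_iota => /andP[d_m /andP[d_gt0 _]].
  by rewrite dvdn_div // divn_gt0 // dvdn_leq // ltnS leq_div divnA // mulKn.
transitivity (\big[op/idx]_(d <- map (divn m) D) F d); last by rewrite big_map.
apply: perm_big; apply: uniq_perm => //.
  rewrite map_inj_in_uniq // => d e /D_div[_ dK] /D_div[_ eK] de.
  by rewrite -dK de eK.
move=> d; apply/idP/mapP => [/D_div[dD dd] | [e /D_div[eD _] ->] //].
by exists (m %/ d).
Qed.

Local Open Scope ring_scope.

Section PowerSums.
Variable R : realFieldType.
Implicit Types (h y : R) (n p q : nat).

Lemma midpoint_exprD h y p : 0 <= h <= y ->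
  2 * y ^+ p <= (y + h) ^+ p + (y - h) ^+ p.
Proof.
case/andP=> h_ge0 hy; elim: p => [|p IHp]; first by rewrite !expr0; lra.
have y_ge0 : 0 <= y by lra.
have le_pow : (y - h) ^+ p <= (y + h) ^+ p by rewrite lerXn2r ?nnegrE; lra.
have -> : (y + h) ^+ p.+1 + (y - h) ^+ p.+1 =
    y * ((y + h) ^+ p + (y - h) ^+ p) + h * ((y + h) ^+ p - (y - h) ^+ p).
  by rewrite !exprS; ring.
have := ler_wpM2l y_ge0 IHp.
have : 0 <= h * ((y + h) ^+ p - (y - h) ^+ p) by rewrite mulr_ge0 ?subr_ge0.
rewrite exprS; lra.
Qed.

(* The midpoint rule underestimates the integral of the convex function (p+1) x^p. *)
Lemma midpoint_exprB h y p : 0 <= h <= y ->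
  2 * h * p.+1%:R * y ^+ p <= (y + h) ^+ p.+1 - (y - h) ^+ p.+1.
Proof.
move=> hy; have /andP[h_ge0 le_hy] := hy; have y_ge0 : 0 <= y by lra.
elim: p => [|p IHp]; first by rewrite !expr1 expr0; lra.
have -> : (y + h) ^+ p.+2 - (y - h) ^+ p.+2 =
    y * ((y + h) ^+ p.+1 - (y - h) ^+ p.+1) + h * ((y + h) ^+ p.+1 + (y - h) ^+ p.+1).
  by rewrite !(exprS _ p.+1); ring.
have := ler_wpM2l y_ge0 IHp.
have := ler_wpM2l h_ge0 (midpoint_exprD p.+1 hy).
rewrite [y ^+ p.+1]exprS -[p.+2%:R]natr1; lra.
Qed.

Lemma sum_expr_le p n :
  \sum_(i < n.+1) (i%:R : R) ^+ p.+1 <= (n%:R + 2^-1) ^+ p.+2 / p.+2%:R.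
Proof.
elim: n => [|n IHn].
  by rewrite big_ord1 expr0n divr_ge0 ?exprn_ge0 ?ler0n //; lra.
rewrite big_ord_recr /=.
have step : (n.+1%:R : R) ^+ p.+1 <=
    ((n.+1%:R + 2^-1) ^+ p.+2 - (n%:R + 2^-1) ^+ p.+2) / p.+2%:R.
  rewrite ler_pdivlMr ?ltr0n // mulrC.
  have := @midpoint_exprB 2^-1 n.+1%:R p.+1.
  rewrite -[n.+1%:R]natr1 (_ : n%:R + 1 - 2^-1 = n%:R + 2^-1 :> R); last by lra.
  by rewrite mulfV ?mul1r //; apply; have := ler0n R n; lra.
by apply: le_trans (lerD IHn step) _; rewrite -mulrDl subrKC.
Qed.

Lemma sum_weighted_expr_le p n :
  \sum_(i < n.+1) (n - i)%:R * (i%:R : R) ^+ p.+1 <=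
    n%:R ^+ p.+3 / (p.+2%:R * p.+3%:R).
Proof.
have D_gt0 : 0 < p.+2%:R * p.+3%:R :> R by rewrite mulr_gt0 ?ltr0n.
elim: n => [|n IHn].
  by rewrite big_ord1 /= expr0n mulr0 expr0n mul0r.
rewrite big_ord_recr /= subnn mul0r addr0.
have -> : \sum_(i < n.+1) (n.+1 - i)%:R * (i%:R : R) ^+ p.+1 =
    \sum_(i < n.+1) (n - i)%:R * (i%:R : R) ^+ p.+1 + \sum_(i < n.+1) (i%:R : R) ^+ p.+1.
  rewrite -big_split; apply: eq_bigr => i _ /=.
  by rewrite subSn -1?ltnS // -natr1 mulrDl mul1r.
have step : (n%:R + 2^-1 : R) ^+ p.+2 / p.+2%:R <=
    (n.+1%:R ^+ p.+3 - n%:R ^+ p.+3) / (p.+2%:R * p.+3%:R).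
  have mid : p.+3%:R * (n%:R + 2^-1) ^+ p.+2 <= n.+1%:R ^+ p.+3 - n%:R ^+ p.+3 :> R.
    have := @midpoint_exprB 2^-1 (n%:R + 2^-1) p.+2.
    rewrite -[n.+1%:R]natr1 (_ : n%:R + 2^-1 + 2^-1 = n%:R + 1 :> R); last by lra.
    rewrite (_ : n%:R + 2^-1 - 2^-1 = n%:R :> R); last by lra.
    by rewrite mulfV ?mul1r //; apply; have := ler0n R n; lra.
  rewrite [X in X <= _](_ : _ = p.+3%:R * (n%:R + 2^-1) ^+ p.+2 / (p.+2%:R * p.+3%:R)).
    by rewrite ler_wpM2r // invr_ge0 ltW.
  by field; rewrite -!natrD !pnatr_eq0.
apply: le_trans (lerD IHn (le_trans (sum_expr_le p n) step)) _.
by rewrite -mulrDl subrKC.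
Qed.

Lemma convolution_expr_le q p n :
  \sum_(i < n.+1) (i%:R : R) ^+ q.+1 * (n - i)%:R ^+ p.+1 <=
    n%:R ^+ (q + p.+3) / (p.+2%:R * p.+3%:R).
Proof.
apply: le_trans (_ : _ <= n%:R ^+ q * \sum_(i < n.+1) (n - i)%:R * (i%:R : R) ^+ p.+1) _.
  rewrite mulr_sumr (reindex_inj rev_ord_inj) /=; apply: ler_sum => i _.
  rewrite subSS subKn -1?ltnS // exprSr -mulrA.
  rewrite ler_wpM2r ?mulr_ge0 ?exprn_ge0 ?ler0n //.
  by rewrite lerXn2r ?nnegrE ?ler0n // ler_nat leq_subr.
by rewrite exprD -mulrA ler_wpM2l ?exprn_ge0 ?ler0n // sum_weighted_expr_le.
Qed.

End PowerSums.

Lemma fps_mul1l : left_id fps_one fps_mul.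
Proof.
move=> f; apply: funext => n; rewrite /fps_mul big_ord_recl /= subn0 mul1r.
by rewrite big1 ?addr0 // => i _; rewrite mul0r.
Qed.

Lemma fps_mul1r : right_id fps_one fps_mul.
Proof.
move=> f; apply: funext => n; rewrite /fps_mul big_ord_recr /= subnn mulr1.
by rewrite big1 ?add0r // => i _; rewrite /fps_one subn_eq0 leqNgt ltn_ord mulr0.
Qed.

Lemma fps_mulA : associative fps_mul.
Proof.
move=> f g h; apply: funext => n; rewrite /fps_mul.
have shift i : (i <= n)%N -> \sum_(j < (n - i).+1) g j * h (n - i - j)%N =
    \sum_(i <= l < n.+1) g (l - i)%N * h (n - l)%N.
  move=> le_in; rewrite (big_addn 0) -subSn // big_mkord.
  by apply: eq_bigr => j _; rewrite addnK addnC subnDA.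
transitivity (\sum_(0 <= i < n.+1) \sum_(0 <= l < n.+1 | (i <= l)%N)
                f i * (g (l - i)%N * h (n - l)%N)).
  rewrite big_mkord; apply: eq_bigr => i _.
  by rewrite shift -1?ltnS // (big_nat_widenl _ 0) // mulr_sumr.
rewrite (exchange_big_dep xpredT) //= big_mkord; apply: eq_bigr => l _.
rewrite (big_ord_widen n.+1 (fun i => f i * g (l - i)%N) (ltn_ord l)).
rewrite mulr_suml [LHS]big_mkord.
by apply: eq_bigr => i _; rewrite mulrA.
Qed.

Lemma fps_mul_split f g n :
  fps_mul f g n.+1 =
    f 0%N * g n.+1 + \sum_(1 <= i < n.+1) f i * g (n.+1 - i)%N + f n.+1 * g 0%N.
Proof.
rewrite /fps_mul -(big_mkord xpredT (fun i => f i * g (n.+1 - i)%N)).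
by rewrite big_nat_recl // big_nat_recr //= subn0 subnn big_add1 addrA.
Qed.

Section Estimates.
Variable R : realType.

Definition Ln (m : nat) : R := 1 + ln m%:R.

Lemma Ln_ge1 m : (0 < m)%N -> 1 <= Ln m.
Proof. by move=> m_gt0; rewrite lerDl ln_ge0 // ler1n. Qed.

Lemma Ln_le m n : (0 < m)%N -> (m <= n)%N -> Ln m <= Ln n.
Proof.
move=> m_gt0 le_mn; rewrite lerD2l ler_ln ?posrE ?ltr0n ?ler_nat //.
exact: leq_trans le_mn.
Qed.

Lemma harmonic_le_Ln m : \sum_(1 <= d < m.+1) (d%:R : R)^-1 <= Ln m.
Proof.
rewrite /Ln; elim: m => [|m IHm]; first by rewrite big_geq // ln0 //; lra.
rewrite big_nat_recr //=; have [->|m_gt0] := posnP m.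
  by rewrite big_geq // ln1 invr1; lra.
have lnS : (m.+1%:R : R)^-1 <= ln m.+1%:R - ln m%:R.
  have : ln (1 - (m.+1%:R)^-1) <= - (m.+1%:R : R)^-1.
    by rewrite le_ln1Dx // ltrN2 invf_lt1 // ltr1n.
  rewrite (_ : 1 - _ = m%:R / m.+1%:R); last first.
    by rewrite -natr1; field; rewrite natr1 pnatr_eq0.
  by rewrite lnM ?posrE ?invr_gt0 ?ltr0n // lnV ?posrE // lerNr opprB.
by apply: le_trans (lerD IHm lnS) _; lra.
Qed.

Lemma sigma_le l m : (0 < l)%N -> (0 < m)%N ->
  (sigma l m)%:R <= (m%:R : R) ^+ l * Ln m.
Proof.
move=> l_gt0 m_gt0; rewrite /sigma big_divisors_div // natr_sum.
apply: le_trans (_ : _ <= \sum_(1 <= d < m.+1 | (d %| m)%N) m%:R ^+ l * (d%:R)^-1) _.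
  rewrite big_nat_cond [leRHS]big_nat_cond; apply: ler_sum => d.
  case/andP=> /andP[d_gt0 _] d_m.
  have d_pos : 0 < d%:R :> R by rewrite ltr0n.
  rewrite natrX natr_div ?unitfE ?gt_eqF // exprMn exprVn ler_wpM2l ?exprn_ge0 //.
  by rewrite lef_pV2 ?posrE ?exprn_gt0 // ler_eXnr // ler1n.
rewrite -mulr_sumr ler_wpM2l ?exprn_ge0 //; apply: le_trans (harmonic_le_Ln m).
by rewrite [leRHS](bigID (fun d => d %| m)%N) /= lerDl sumr_ge0.
Qed.

(* [(2 * k).-1] is truncated: for [k = 0] the majorant is [1], not [1 / m]. *)
Definition majorant (k m : nat) : R := m%:R ^+ (2 * k).-1 * Ln m ^+ k.

Definition fps_bounded (f : fps) (k : nat) (h : R) :=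
  f 0%N = 1 /\ forall m, (0 < m)%N -> `|(f m)%:~R : R| <= h * majorant k m.

Lemma majorant_ge0 k m : (0 < m)%N -> 0 <= majorant k m.
Proof.
by move=> m_gt0; rewrite mulr_ge0 ?exprn_ge0 // (le_trans _ (Ln_ge1 m_gt0)).
Qed.

Lemma majorant_le k k' m : (k <= k')%N -> (0 < m)%N -> majorant k m <= majorant k' m.
Proof.
move=> le_kk' m_gt0; have L_ge1 := Ln_ge1 m_gt0.
rewrite ler_pM ?exprn_ge0 ?(le_trans _ L_ge1) //.
  by rewrite ler_weXn2l ?ler1n //; lia.
by rewrite ler_weXn2l.
Qed.

Lemma fps_bounded_le f k h h' : h <= h' -> fps_bounded f k h -> fps_bounded f k h'.
Proof.
move=> le_hh' [f0 bf]; split=> // m m_gt0; apply: le_trans (bf m m_gt0) _.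
by rewrite ler_wpM2r ?majorant_ge0.
Qed.

Lemma fps_bounded_one : fps_bounded fps_one 0 0.
Proof. by split=> // m m_gt0; rewrite /fps_one gtn_eqF // normr0 mul0r. Qed.

Lemma fps_bounded_sigma (e : int) l w : (0 < l)%N -> (l <= (2 * w).-1)%N ->
  fps_bounded (fun n => if n == 0%N then 1 else e * (sigma l n)%:Z) w `|e|%:~R.
Proof.
move=> l_gt0 le_lw; split=> // m m_gt0; rewrite gtn_eqF // intrM normrM.
rewrite -intr_norm ler_wpM2l ?ler0z //= normr_nat.
have L_ge1 := Ln_ge1 m_gt0.
apply: le_trans (sigma_le l_gt0 m_gt0) _.
rewrite ler_pM ?exprn_ge0 ?ler0n ?(le_trans _ L_ge1) //.
  by rewrite ler_weXn2l ?ler1n.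
by rewrite -[leLHS]expr1 ler_weXn2l //; lia.
Qed.

Lemma fps_bounded_E2 : fps_bounded E2 1 24.
Proof. by have := @fps_bounded_sigma (-24) 1 1 isT isT; rewrite normrN. Qed.

Lemma fps_bounded_E4 : fps_bounded E4 2 240.
Proof. by have := @fps_bounded_sigma 240 3 2 isT isT. Qed.

Lemma fps_bounded_E6 : fps_bounded E6 3 504.
Proof. by have := @fps_bounded_sigma (-504) 5 3 isT isT; rewrite normrN. Qed.

Section Product.
Variables (f g : fps) (a b : nat) (h1 h2 : R).
Hypotheses (h1_ge0 : 0 <= h1) (h2_ge0 : 0 <= h2).
Hypotheses (bf : fps_bounded f a.+1 h1) (bg : fps_bounded g b.+1 h2).

Lemma fps_bounded_interior n :
  `|(\sum_(1 <= i < n.+1) f i * g (n.+1 - i)%N)%:~R : R| <=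
    h1 * h2 / ((2 * b).+2%:R * (2 * b).+3%:R) * majorant (a.+1 + b.+1) n.+1.
Proof.
have [_ bfm] := bf; have [_ bgm] := bg.
set N := n.+1; set K := (a.+1 + b.+1)%N; set L := Ln N.
set T := fun i => (i%:R : R) ^+ (2 * a).+1 * (N - i)%:R ^+ (2 * b).+1.
rewrite rmorph_sum; apply: le_trans (ler_norm_sum _ _ _) _.
apply: le_trans (_ : _ <= \sum_(1 <= i < N) h1 * h2 * L ^+ K * T i) _.
  rewrite big_nat_cond [leRHS]big_nat_cond; apply: ler_sum => i.
  case/andP=> /andP[i_gt0 lt_iN] _; have Ni_gt0 : (0 < N - i)%N by rewrite subn_gt0.
  rewrite /= intrM normrM.
  apply: le_trans (ler_pM _ _ (bfm i i_gt0) (bgm _ Ni_gt0)) _ => //.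
  rewrite /majorant /T (_ : (2 * a.+1).-1 = (2 * a).+1) 1?(_ : (2 * b.+1).-1 = (2 * b).+1);
    try lia.
  have Li : Ln i ^+ a.+1 <= L ^+ a.+1.
    by rewrite lerXn2r ?nnegrE ?Ln_le ?(le_trans _ (Ln_ge1 _)) //; lia.
  have LNi : Ln (N - i) ^+ b.+1 <= L ^+ b.+1.
    by rewrite lerXn2r ?nnegrE ?Ln_le ?(le_trans _ (Ln_ge1 _)) ?leq_subr.
  have := ler_pM (exprn_ge0 _ (le_trans ler01 (Ln_ge1 i_gt0)))
    (exprn_ge0 _ (le_trans ler01 (Ln_ge1 Ni_gt0))) Li LNi.
  rewrite -exprD -/K.
  have : 0 <= h1 * h2 * ((i%:R : R) ^+ (2 * a).+1 * (N - i)%:R ^+ (2 * b).+1).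
    by rewrite !mulr_ge0 ?exprn_ge0.
  move: (Ln i ^+ _) (Ln (N - i) ^+ _) (L ^+ K) ((i%:R : R) ^+ _) ((N - i)%:R ^+ _).
  by move=> A1 A2 B P1 P2; nra.
rewrite -mulr_sumr.
have -> : \sum_(1 <= i < N) T i = \sum_(i < N.+1) T i.
  rewrite big_add1 -(big_mkord xpredT T) big_nat_recl // [X in _ = _ + X]big_nat_recr //=.
  have T0 : T 0%N = 0 by rewrite /T expr0n mul0r.
  have TN : T n.+1 = 0 by rewrite /T subnn expr0n mulr0.
  by rewrite T0 TN add0r addr0.
apply: le_trans (ler_wpM2l _ (convolution_expr_le _ _ _ _)) _.
  by rewrite !mulr_ge0 ?exprn_ge0 ?(le_trans ler01 (Ln_ge1 _)).
rewrite /majorant (_ : (2 * K).-1 = (2 * a + (2 * b).+3)%N); last by lia.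
by rewrite le_eqVlt; apply/predU1P; left; ring.
Qed.

Lemma fps_bounded_mul :
  fps_bounded (fps_mul f g) (a.+1 + b.+1)
    (h1 + h2 + h1 * h2 / ((2 * b).+2%:R * (2 * b).+3%:R)).
Proof.
have [f0 bfm] := bf; have [g0 bgm] := bg; split.
  by rewrite /fps_mul big_ord1 f0 g0 mulr1.
case=> // n _; set K := (a.+1 + b.+1)%N.
have bfK : `|(f n.+1)%:~R : R| <= h1 * majorant K n.+1.
  by apply: le_trans (bfm _ (ltn0Sn n)) _; rewrite ler_wpM2l // majorant_le //; lia.
have bgK : `|(g n.+1)%:~R : R| <= h2 * majorant K n.+1.
  by apply: le_trans (bgm _ (ltn0Sn n)) _; rewrite ler_wpM2l // majorant_le //; lia.
rewrite fps_mul_split f0 g0 mul1r mulr1 !intrD.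
apply: le_trans (ler_normD _ _) _; apply: le_trans (lerD (ler_normD _ _) (lexx _)) _.
apply: le_trans (lerD (lerD bgK (fps_bounded_interior n)) bfK) _.
by rewrite le_eqVlt; apply/predU1P; left; ring.
Qed.

End Product.

Section QuarticBound.
Variables (E : fps) (w e : nat).
Hypothesis bE : fps_bounded E w.+1 e%:R.
(* [e + 24 K^4 + e * 24 K^4 / (2K (2K+1)) <= 24 (w.+1 + K)^4] with denominators
   cleared: the constant of [fps_bounded_mul] stays quartic.  At [K = 0] it reads
   [e <= 24 w.+1^4]. *)
Hypothesis growth : forall K,
  ((e + 24 * K ^ 4) * (2 * K).+1 + 12 * e * K ^ 3 <= 24 * (w.+1 + K) ^ 4 * (2 * K).+1)%N.

Lemma fps_bounded_mul_quartic F K :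
  fps_bounded F K (24 * K ^ 4)%:R ->
  fps_bounded (fps_mul E F) (w.+1 + K) (24 * (w.+1 + K) ^ 4)%:R.
Proof.
case: K => [|K] bF.
  have -> : F = fps_one.
    have [F0 bFm] := bF; apply: funext => -[|m] //.
    by have := bFm _ (ltn0Sn m); rewrite mul0r normr_le0 intr_eq0 => /eqP.
  rewrite fps_mul1r addn0; apply: fps_bounded_le bE; rewrite ler_nat.
  by have := growth 0; rewrite !muln0 !addn0 !muln1.
apply: fps_bounded_le (fps_bounded_mul (ler0n _ _) (ler0n _ _) bE bF).
set D := ((2 * K).+2 * (2 * K).+3)%N.
have D_gt0 : 0 < D%:R :> R by rewrite ltr0n.
rewrite -natrM -/D -(ler_pM2r D_gt0) mulrDl divfK ?gt_eqF //.
rewrite -!natrM -!natrD -natrM -natrD ler_nat.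
have := leq_mul (leqnn (2 * K.+1)) (growth K.+1); rewrite /D (expnS K.+1 3).
by move: (K.+1 ^ 3)%N ((w.+1 + K.+1) ^ 4)%N => K3 Z; nia.
Qed.

Lemma fps_bounded_pow_mul j F K :
  fps_bounded F K (24 * K ^ 4)%:R ->
  fps_bounded (fps_mul (fps_pow E j) F) (w.+1 * j + K) (24 * (w.+1 * j + K) ^ 4)%:R.
Proof.
move=> bF; elim: j => [|j IHj]; first by rewrite fps_mul1l muln0.
by rewrite -fps_mulA mulnS -addnA; apply: fps_bounded_mul_quartic.
Qed.

End QuarticBound.

Lemma fps_bounded_s_abc a b c :
  let k := (a + 2 * b + 3 * c)%N in fps_bounded (s_abc a b c) k (24 * k ^ 4)%:R.
Proof.
rewrite /s_abc -[fps_pow E6 c]fps_mul1r /=.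
rewrite (_ : a + 2 * b + 3 * c = 1 * a + (2 * b + (3 * c + 0)))%N; last by lia.
apply: (fps_bounded_pow_mul fps_bounded_E2) => [K|]; first by rewrite !expnS expn0; nia.
apply: (fps_bounded_pow_mul fps_bounded_E4) => [K|]; first by rewrite !expnS expn0; nia.
apply: (fps_bounded_pow_mul fps_bounded_E6) => [K|]; first by rewrite !expnS expn0; nia.
exact: fps_bounded_one.
Qed.

End Estimates.


Lemma quartic_le_exp2 k : (24 * k ^ 4 <= 109 * 2 ^ (2 * k).-1)%N.
Proof.
elim: k => // k IHk; have [k_le3 | k_gt3] := leqP k 3.
  by case: k k_le3 {IHk} => [|[|[|[|]]]].
have : ((3 * k.+1) ^ 4 <= (4 * k) ^ 4)%N by rewrite leq_exp2r //; lia.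
rewrite !expnMn (_ : (2 * k.+1).-1 = (2 * k).-1 + 2)%N; last by lia.
rewrite expnD; lia.
Qed.

Theorem lemma3p2 (R : realType) (a b c n : nat) : (1 <= n)%N ->
  let k : nat := (a + 2 * b + 3 * c)%N in
  `|(s_abc a b c n)%:~R : R|
    <= 109 * (2 : R) ^ (2 * (k : int) - 1) * (n%:R : R) ^ (2 * (k : int) - 1)
       * (1 + ln (n%:R : R)) ^+ k.
Proof.
move=> n_gt0; cbv zeta; set k := (a + 2 * b + 3 * c)%N.
have [_ /(_ n n_gt0)] := fps_bounded_s_abc R a b c.
rewrite -/k /majorant /Ln; have [k0 | k_gt0] := posnP k.
  rewrite k0 mul0r => /le_trans; apply.
  by rewrite !mulr_ge0 ?exprz_ge0 ?exprn_ge0 ?ler0n ?addr_ge0 ?ln_ge0 ?ler1n.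
rewrite (_ : 2 * (k : int) - 1 = (2 * k).-1 :> int); last by lia.
rewrite -!exprnP -mulrA => /le_trans; apply.
rewrite ler_wpM2r ?mulr_ge0 ?exprn_ge0 ?addr_ge0 ?ln_ge0 ?ler1n //.
by rewrite -[2]/(2%:R) -natrX -natrM ler_nat quartic_le_exp2.
Qed.
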